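(* Let $V$ be a finite-dimensional vector space over an algebraically closed field $k$, let $G = \mathrm{GL}(V)$, let $U \subseteq V$ be a subspace and fix a complement $\widetilde{U}$ to $U$ in $V$. Let $K = \mathrm{GL}(U) \le G$, embedded via the decomposition $V = U \oplus \widetilde{U}$ (acting trivially on $\widetilde{U}$). Then $\mathcal{S}_K = \{W \subseteq V \mid (W \subseteq V) \in \mathcal{F}_K\}$.
   Context: A flag in $V$ is a chain $0\neq W_1 \subsetneq \dots \subsetneq W_m \subsetneq V$, written $(W_1\subseteq\dots\subseteq W_m\subseteq V)$. For a cocharacter $\lambda$ of $G$, $P_\lambda = \{g \in G \mid \lim_{a\to 0}\lambda(a)g\lambda(a)^{-1} \text{ exists}\}$. $\mathcal{F}_K$ is the set of flags whose stabilizer in $G$ equals $P_\lambda$ for some cocharacter $\lambda$ of $K$, and $\mathcal{S}_K$ is the set of subspaces of $V$ appearing in flags from $\mathcal{F}_K$. *)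

From HB Require Import structures.
From mathcomp Require Import all_boot all_order all_algebra.
Set Implicit Arguments. Unset Strict Implicit. Unset Printing Implicit Defensive.
Import GRing.Theory.
Local Open Scope ring_scope.

(* V = k^n, vectors written as row vectors; subspaces are row spaces of
   matrices (mxalgebra). A matrix g acts on V by the usual left action on
   column vectors, i.e. on a row vector v by v |-> v *m g^T, hence on a
   subspace W by W |-> W *m g^T. *)

(* K = GL(U) embedded in GL(V) via V = U (+) Ut, acting trivially on Ut:
   invertible g fixing every vector of Ut and mapping U into U. *)
Definition inK (k : fieldType) (n : nat) (U Ut : 'M[k]_n) (g : 'M[k]_n) : bool :=
  [&& g \in unitmx, Ut *m g^T == Ut & (U *m g^T <= U)%MS].

(* A cocharacter of a subgroup H of GL_n: a morphism of algebraic groups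
   G_m -> GL_n with image in H, i.e. a group homomorphism k^x -> GL_n whose
   matrix entries are regular functions on G_m (Laurent polynomials). Only
   the values at a <> 0 are relevant. *)
Definition cocharacter_of (k : fieldType) (n : nat) (H : 'M[k]_n -> bool)
    (lam : k -> 'M[k]_n) : Prop :=
  [/\ forall a, a != 0 -> (lam a \in unitmx) && H (lam a),
      lam 1 = 1%:M,
      forall a b, a != 0 -> b != 0 -> lam (a * b) = lam a *m lam b &
      exists (N : nat) (p : 'I_n -> 'I_n -> {poly k}),
        forall a, a != 0 -> forall i j, lam a i j = a ^- N * (p i j).[a] ].

(* lim_{a -> 0} lam(a) g lam(a)^-1 exists (in G): the morphism
   a |-> lam(a) g lam(a)^-1 on G_m extends to a morphism A^1 -> G. *)
Definition lim0_exists (k : fieldType) (n : nat) (lam : k -> 'M[k]_n)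
    (g : 'M[k]_n) : Prop :=
  exists q : 'I_n -> 'I_n -> {poly k},
    (forall a, a != 0 -> forall i j,
        (lam a *m g *m invmx (lam a)) i j = (q i j).[a]) /\
    (\matrix_(i, j) (q i j).[0]) \in unitmx.

Definition P_lam (k : fieldType) (n : nat) (lam : k -> 'M[k]_n) (g : 'M[k]_n)
  : Prop := g \in unitmx /\ lim0_exists lam g.

Definition is_flag (k : fieldType) (n : nat) (fl : seq 'M[k]_n) : bool :=
  all (fun W => (0 < \rank W)%N && (\rank W < n)%N) fl &&
  sorted (fun A B => (A < B)%MS) fl.

Definition stab (k : fieldType) (n : nat) (fl : seq 'M[k]_n) (g : 'M[k]_n)
  : bool := (g \in unitmx) && all (fun W => (W *m g^T == W)%MS) fl.

Definition in_FK (k : fieldType) (n : nat) (U Ut : 'M[k]_n) (fl : seq 'M[k]_n)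
  : Prop :=
  is_flag fl /\
  exists lam, cocharacter_of (inK U Ut) lam /\
    (forall g, stab fl g <-> P_lam lam g).

Definition in_SK (k : fieldType) (n : nat) (U Ut : 'M[k]_n) (W : 'M[k]_n)
  : Prop :=
  exists fl, in_FK U Ut fl /\ exists2 W', W' \in fl & (W' == W)%MS.

(* Write the cocharacter as [lam a = a^-N *: \sum_m a^m *: C m]. Multiplicativity
   forces the [C m] to be orthogonal idempotents summing to 1; since vectors act on
   the right through [g^T], the row spaces of the [(C m)^T] are the weight spaces of
   lam. The parabolic P_lam contains every invertible [1 + Z] whose transpose maps
   weight j into weight i >= j, and such maps can send a nonzero vector anywhere in
   weight i. Hence a P_lam-stable subspace W with a nonzero component of weight j
   contains every weight space of weight >= j, i.e. W is the image of an idempotent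
   A that is a sum of some [(C m)^T]. For any idempotent A, the cocharacter
   [a |-> a^-e (a A + (1 - A))] has the stabiliser of im A as its parabolic; it lies
   in K because U, being stable under lam, is a sum of weight pieces (so A-stable),
   while Ut, fixed by lam, lies in the single weight space N, which A either fixes
   or kills, and the shift e compensates for this. *)

From HB Require Import structures.
From mathcomp Require Import all_boot all_order all_algebra.
From mathcomp Require Import ring.
Set Implicit Arguments. Unset Strict Implicit. Unset Printing Implicit Defensive.
Import GRing.Theory.
Local Open Scope ring_scope.

Section NonzeroPoints.
Variable k : closedFieldType.

Lemma exists_nonzero_nonroot (p : {poly k}) :
  p != 0 -> exists2 a, a != 0 & ~~ root p a.
Proof.
move=> pn0; have sp : (1 < size (p * 'X)%R)%N.
  by rewrite size_mulX // ltnS lt0n size_poly_eq0.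
have /closed_rootP[a /rootP] : size (p * 'X - 1) != 1%N.
  by rewrite size_polyDl ?size_polyN ?size_poly1 // gtn_eqF.
rewrite !hornerE => /eqP; rewrite subr_eq0 => /eqP pa1.
have := oner_neq0 k; rewrite -pa1 mulf_eq0 negb_or => /andP[pa0 a0].
by exists a.
Qed.

Lemma poly_eq0_on_nonzero (p : {poly k}) :
  (forall a, a != 0 -> p.[a] = 0) -> p = 0.
Proof.
move=> p0; apply: contraTeq isT => /exists_nonzero_nonroot[a /p0 pa].
by rewrite /root pa eqxx.
Qed.

Lemma mx_coefs_eq0 (p q D : nat) (X : 'I_D -> 'M[k]_(p, q)) :
  (forall a, a != 0 -> \sum_(m < D) a ^+ m *: X m = 0) -> forall m, X m = 0.
Proof.
move=> X0 m; apply/matrixP => i j; rewrite mxE.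
have /(congr1 (coefp m)) : \sum_(l < D) X l i j *: 'X^l = 0.
  apply: poly_eq0_on_nonzero => a a0; rewrite horner_sum.
  transitivity ((\sum_(l < D) a ^+ l *: X l) i j); last by rewrite X0 // mxE.
  by rewrite summxE; apply: eq_bigr => l _; rewrite hornerZ hornerXn mxE mulrC.
rewrite /= coef_sum coef0 (bigD1 m) //= coefZ coefXn eqxx mulr1 big1 ?addr0 // => l.
by move=> lm; rewrite coefZ coefXn eq_sym (negbTE (lm : (l : nat) != m)) mulr0.
Qed.

Lemma laurent_pole_eq0 (q : {poly k}) (z l r : k) :
  (forall a, a != 0 -> q.[a] = l + a^-1 * z + a * r) -> z = 0.
Proof.
move=> qE; have /(congr1 (coefp 0)) : q * 'X - z%:P - l *: 'X - r *: 'X^2 = 0.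
  apply: poly_eq0_on_nonzero => a a0.
  rewrite !(hornerD, hornerN, hornerMX, hornerC, hornerZ, hornerX, hornerXn) qE //.
  by field.
rewrite /= !coefB coefMX coefC coefZ coefX coefZ coefXn coef0 /=.
by rewrite !mulr0 !subr0 sub0r => /eqP; rewrite oppr_eq0 => /eqP.
Qed.

Lemma exists_unit_add_scale (n : nat) (X : 'M[k]_n) :
  exists2 t, t != 0 & 1%:M + t *: X \in unitmx.
Proof.
have [s s0 sX] := exists_nonzero_nonroot (monic_neq0 (char_poly_monic X)).
exists (- s^-1); first by rewrite oppr_eq0 invr_eq0.
have -> : 1%:M + - s^-1 *: X = (- s^-1) *: (X - s%:M).
  by rewrite scalerBr scale_scalar_mx mulNr mulVf // raddfN opprK addrC.
rewrite unitmxZ ?unitfE ?oppr_eq0 ?invr_eq0 // -row_free_unit -kermx_eq0.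
by rewrite -eigenvalue_root_char in sX; apply: negbNE sX.
Qed.

End NonzeroPoints.

Lemma cocharacter_expansion (k : fieldType) (n N : nat) (lam : k -> 'M[k]_n)
    (p : 'I_n -> 'I_n -> {poly k}) :
  (forall a, a != 0 -> forall i j, lam a i j = a ^- N * (p i j).[a]) ->
  exists D (C : 'I_D -> 'M[k]_n),
    forall a, a != 0 -> lam a = a ^- N *: \sum_(m < D) a ^+ m *: C m.
Proof.
move=> lamE; pose D := \max_(i : 'I_n) \max_(j : 'I_n) size (p i j).
exists D, (fun m => \matrix_(i, j) (p i j)`_m) => a a0.
apply/matrixP => i j; rewrite lamE // !mxE summxE (@horner_coef_wide _ D).
  by congr (_ * _); apply: eq_bigr => m _; rewrite !mxE mulrC.
apply: leq_trans (leq_bigmax_cond (F := fun j => size (p i j)) j isT) _.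
exact: (leq_bigmax_cond (F := fun i => \max_(j : 'I_n) size (p i j)) i isT).
Qed.

Lemma lim0_exists_monomial (k : fieldType) (n e : nat) (lam : k -> 'M[k]_n)
    (g M0 M1 : 'M[k]_n) :
  (forall a, a != 0 -> lam a *m g *m invmx (lam a) = M0 + a ^+ e *: M1) ->
  M0 + 0 ^+ e *: M1 \in unitmx -> lim0_exists lam g.
Proof.
move=> conjE M_unit; exists (fun i j => (M0 i j)%:P + M1 i j *: 'X^e); split.
  by move=> a a0 i j; rewrite conjE // !mxE !hornerE mulrC.
by congr (_ \in unitmx): M_unit; apply/matrixP => i j; rewrite !mxE !hornerE mulrC.
Qed.

Lemma lim0_exists_pole_eq0 (k : closedFieldType) (n : nat) (lam : k -> 'M[k]_n)
    (g L Z R : 'M[k]_n) :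
  lim0_exists lam g ->
  (forall a, a != 0 -> lam a *m g *m invmx (lam a) = L + a^-1 *: Z + a *: R) ->
  Z = 0.
Proof.
case=> q [qE _] conjE; apply/matrixP => i j; rewrite mxE.
by apply: (laurent_pole_eq0 (q := q i j) (l := L i j) (r := R i j)) => a a0;
  rewrite -qE // conjE // !mxE.
Qed.

Lemma exists_mulmx_sub (k : fieldType) (m n : nat) (M : 'M[k]_(m, n)) (v : 'rV[k]_n) :
  M != 0 -> exists Y : 'M[k]_n, (v <= M *m Y)%MS.
Proof.
move=> Mn0; have /existsP[r Mr] : [exists r, row r M != 0].
  rewrite -negb_forall; apply: contra Mn0 => /forallP M0.
  by apply/eqP/row_matrixP => r; rewrite row0; apply/eqP.
have full : row_full (row r M)^T by rewrite -col_leq_rank mxrank_tr lt0n mxrank_eq0.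
have /submxP[Y vY] := submx_full v^T full.
by exists Y^T; rewrite -[v]trmxK vY trmx_mul trmxK -row_mul row_sub.
Qed.

Section CocharacterWeights.
Variables (k : closedFieldType) (n N D : nat) (lam : k -> 'M[k]_n) (C : 'I_D -> 'M[k]_n).
Hypothesis lamE : forall a, a != 0 -> lam a = a ^- N *: \sum_(m < D) a ^+ m *: C m.
Hypothesis lam1 : lam 1 = 1%:M.
Hypothesis lamM : forall a b, a != 0 -> b != 0 -> lam (a * b) = lam a *m lam b.

Lemma lam_expand a : a != 0 -> \sum_(m < D) a ^+ m *: C m = a ^+ N *: lam a.
Proof. by move=> a0; rewrite lamE // scalerA mulrV ?scale1r // unitfE expf_neq0. Qed.

Lemma sum_C : \sum_(m < D) C m = 1%:M.
Proof.
have := lam_expand (oner_neq0 k); rewrite lam1 expr1n scale1r => <-.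
by apply: eq_bigr => m _; rewrite expr1n scale1r.
Qed.

Lemma mulmx_C m m' : C m *m C m' = if m == m' then C m' else 0.
Proof.
pose S a := \sum_(m < D) a ^+ m *: C m.
have SM a b : a != 0 -> b != 0 -> S (a * b) = S a *m S b.
  move=> a0 b0; rewrite /S !lam_expand ?mulf_neq0 // lamM // exprMn -scalerA.
  by rewrite -scalemxAr -scalemxAl !scalerA mulrC.
have row_eq a : a != 0 -> forall m1,
    \sum_(m < D) a ^+ m *: (C m *m C m1) - a ^+ m1 *: C m1 = 0.
  move=> a0; apply: (mx_coefs_eq0 (X := fun m1 =>
    \sum_(m < D) a ^+ m *: (C m *m C m1) - a ^+ m1 *: C m1)) => b b0.
  rewrite -[RHS](subrr (S (a * b))) {1}SM // /S mulmx_sumr -sumrB.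
  apply: eq_bigr => m1 _; rewrite scalerBr scalerA -exprMn mulrC; congr (_ - _).
  rewrite -scalemxAr mulmx_suml; congr (_ *: _).
  by apply: eq_bigr => m2 _; rewrite scalemxAl.
apply/eqP; rewrite -subr_eq0; apply/eqP; move: m.
apply: (mx_coefs_eq0 (X := fun m => C m *m C m' - if m == m' then C m' else 0)) => a a0.
under eq_bigr do rewrite scalerBr; rewrite sumrB.
move/eqP: (row_eq a a0 m'); rewrite subr_eq0 => /eqP->.
rewrite (bigD1 m') //= eqxx big1 ?addr0 ?subrr // => m /negbTE->; exact: scaler0.
Qed.

Lemma lam_mulV a : a != 0 -> lam a *m lam a^-1 = 1%:M.
Proof. by move=> a0; rewrite -lamM ?invr_eq0 // mulfV. Qed.

Lemma lam_unit a : a != 0 -> lam a \in unitmx.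
Proof. by move=> a0; case: (mulmx1_unit (lam_mulV a0)). Qed.

Lemma invmx_lam a : a != 0 -> invmx (lam a) = lam a^-1.
Proof.
move=> a0; rewrite -[LHS]mulmx1 -(lam_mulV a0) mulmxA mulVmx ?mul1mx //.
exact: lam_unit.
Qed.

Lemma mulmx_lam_C a m : a != 0 -> lam a *m C m = (a ^- N * a ^+ m) *: C m.
Proof.
move=> a0; rewrite lamE // -scalemxAl mulmx_suml -scalerA (bigD1 m) //=.
rewrite -scalemxAl mulmx_C eqxx big1 ?addr0 // => i /negbTE im.
by rewrite -scalemxAl mulmx_C im scaler0.
Qed.

Lemma mulmx_C_lam a m : a != 0 -> C m *m lam a = (a ^- N * a ^+ m) *: C m.
Proof.
move=> a0; rewrite lamE // -scalemxAr mulmx_sumr -scalerA (bigD1 m) //=.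
rewrite -scalemxAr mulmx_C eqxx big1 ?addr0 // => i /negbTE im.
by rewrite -scalemxAr mulmx_C eq_sym im scaler0.
Qed.

Lemma conj_lam_block (i j : 'I_D) (Z : 'M[k]_n) a : (j <= i)%N -> a != 0 ->
  Z = C i *m Z *m C j -> lam a *m Z *m invmx (lam a) = a ^+ (i - j) *: Z.
Proof.
move=> ji a0 ZE; rewrite invmx_lam // ZE !mulmxA mulmx_lam_C // -mulmxA.
rewrite mulmx_C_lam ?invr_eq0 // -scalemxAr -!scalemxAl scalerA.
have -> : a ^+ i = a ^+ (i - j) * a ^+ j by rewrite -exprD subnK.
congr (_ *: _); rewrite !exprVn invrK.
by field; rewrite !expf_neq0.
Qed.

Lemma P_lam_unipotent (i j : 'I_D) (Z : 'M[k]_n) : (j <= i)%N ->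
  Z = C i *m Z *m C j -> 1%:M + Z \in unitmx -> P_lam lam (1%:M + Z).
Proof.
move=> ji ZE Z_unit; split=> //.
apply: (lim0_exists_monomial (e := i - j) (M0 := 1%:M) (M1 := Z)) => [a a0|].
  by rewrite mulmxDr mulmx1 mulmxDl mulmxV ?lam_unit // (conj_lam_block ji).
by case: (i - j)%N Z_unit => [|d]; rewrite ?expr0 ?scale1r // expr0n scale0r addr0 unitmx1.
Qed.

Lemma lam_stable_C (m1 : nat) (Y : 'M[k]_(m1, n)) :
  (forall b, b != 0 -> (Y *m (lam b)^T <= Y)%MS) -> forall m, (Y *m (C m)^T <= Y)%MS.
Proof.
move=> Ylam; suff YC0 m : Y *m (C m)^T *m cokermx Y = 0 by move=> m; rewrite submxE YC0.
move: m; apply: (mx_coefs_eq0 (X := fun m => Y *m (C m)^T *m cokermx Y)) => b b0.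
move: (Ylam b b0); rewrite submxE lamE // linearZ linear_sum /= -scalemxAr -scalemxAl.
rewrite scaler_eq0 invr_eq0 expf_eq0 (negbTE b0) andbF /= mulmx_sumr mulmx_suml.
move/eqP => E; rewrite -[RHS]E; apply: eq_bigr => m _.
by rewrite linearZ /= -scalemxAr -scalemxAl.
Qed.

Lemma lam_fixed_C (m1 : nat) (Y : 'M[k]_(m1, n)) :
  (forall b, b != 0 -> Y *m (lam b)^T = Y) ->
  forall m : 'I_D, Y *m (C m)^T = if (m == N :> nat) then Y else 0.
Proof.
move=> Yfix; have YC0 (m : 'I_D) : (m : nat) != N -> Y *m (C m)^T = 0.
  move=> mN; have [b b0] : exists2 b : k, b != 0 & ~~ root ('X^m - 'X^N) b.
    apply: exists_nonzero_nonroot; rewrite subr_eq0.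
    apply: contra mN => /eqP/(congr1 (size : {poly k} -> nat)).
    by rewrite !size_polyXn => -[->].
  rewrite /root !hornerE subr_eq0 => bmN.
  have : Y *m (C m)^T = (b ^- N * b ^+ m) *: (Y *m (C m)^T).
    by rewrite -{1}(Yfix b b0) -mulmxA -trmx_mul mulmx_C_lam // linearZ scalemxAr.
  move/eqP; rewrite -subr_eq0 -{1}[Y *m _]scale1r -scalerBl scaler_eq0 => /orP[|/eqP//].
  rewrite subr_eq0 => /eqP/(congr1 (fun x => b ^+ N * x)).
  by rewrite mulr1 mulVKf ?expf_neq0 // => /eqP; rewrite eq_sym (negbTE bmN).
move=> m; have [mN|mN] := eqVneq (m : nat) N; last exact: YC0.
rewrite -{2}[Y]mulmx1 -trmx1 -sum_C linear_sum mulmx_sumr (bigD1 m) //=.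
rewrite big1 ?addr0 // => m' m'm; apply: YC0; apply: contra m'm => /eqP m'N.
by apply/eqP/val_inj; rewrite /= m'N mN.
Qed.

Lemma mulmx_CT_sum (P : pred 'I_D) m :
  (C m)^T *m \sum_(m' | P m') (C m')^T = if P m then (C m)^T else 0.
Proof.
rewrite mulmx_sumr; under eq_bigr do rewrite -trmx_mul mulmx_C.
case: ifP => Pm; last first.
  by rewrite big1 // => m' Pm'; case: eqP Pm' => [->|_]; rewrite ?Pm ?trmx0.
rewrite (bigD1 m) //= eqxx big1 ?addr0 // => m' /andP[_ /negbTE->].
exact: trmx0.
Qed.

Lemma sum_CT_idem (P : pred 'I_D) :
  let A := \sum_(m | P m) (C m)^T in A *m A = A.
Proof. by rewrite /= {1}mulmx_suml; apply: eq_bigr => m Pm; rewrite mulmx_CT_sum Pm. Qed.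

Lemma stable_sum_C (m1 : nat) (Y : 'M[k]_(m1, n)) (P : pred 'I_D) :
  (forall m, (Y *m (C m)^T <= Y)%MS) -> (Y *m \sum_(m | P m) (C m)^T <= Y)%MS.
Proof. by move=> YC; rewrite mulmx_sumr; apply: summx_sub. Qed.

Lemma fixed_sum_C (m1 : nat) (Y : 'M[k]_(m1, n)) (P : pred 'I_D) :
  (forall b, b != 0 -> Y *m (lam b)^T = Y) ->
  Y *m \sum_(m | P m) (C m)^T = if [exists m, P m && (m == N :> nat)] then Y else 0.
Proof.
move=> Yfix; rewrite mulmx_sumr; under eq_bigr do rewrite (lam_fixed_C Yfix).
case: existsP => [[m0 /andP[Pm0 /eqP m0N]] | noN]; last first.
  rewrite big1 // => m Pm; case: ifP => // /eqP mN.
  by case: noN; exists m; rewrite Pm mN /=.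
rewrite (bigD1 m0) //= m0N eqxx big1 ?addr0 // => m /andP[_ mm0].
by case: ifP => // /eqP mN; case/eqP: mm0; apply: val_inj; rewrite /= mN.
Qed.

Section ParabolicStableSubspace.
Variable W : 'M[k]_n.
Hypothesis W_stable : forall g, P_lam lam g -> (W *m g^T <= W)%MS.

Lemma W_stable_block (i j : 'I_D) (Z : 'M[k]_n) :
  (j <= i)%N -> Z = C i *m Z *m C j -> (W *m Z^T <= W)%MS.
Proof.
move=> ji ZE; have [t t0 tZ_unit] := exists_unit_add_scale Z.
have tZE : t *: Z = C i *m (t *: Z) *m C j by rewrite -scalemxAr -scalemxAl -ZE.
have /W_stable := P_lam_unipotent ji tZE tZ_unit.
rewrite linearD /= trmx1 mulmxDr mulmx1 linearZ /= -scalemxAr => WtZ.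
rewrite -(eqmx_scale _ t0) -[t *: _](addKr W) addmx_sub //.
by rewrite -scaleN1r scalemx_sub.
Qed.

Lemma W_sub_weight_space (i j : 'I_D) :
  (j <= i)%N -> W *m (C j)^T != 0 -> ((C i)^T <= W)%MS.
Proof.
move=> ji WCj; apply/row_subP => r; rewrite -[X in row r X]mul1mx row_mul.
have [Y vY] := exists_mulmx_sub (row r 1%:M) WCj.
apply: submx_trans (submxMr (C i)^T vY) _.
have ZE : C i *m Y^T *m C j = C i *m (C i *m Y^T *m C j) *m C j.
  by rewrite !mulmxA mulmx_C eqxx -!mulmxA mulmx_C eqxx.
by have := W_stable_block ji ZE; rewrite !trmx_mul !trmxK !mulmxA.
Qed.

Lemma eqmx_upper_weights :
  (W :=: (\sum_(m < D | [exists j : 'I_D, (j <= m)%N && (W *m (C j)^T != 0)])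
            (C m)^T)%R)%MS.
Proof.
apply/eqmxP/andP; split.
  rewrite -{1}[W]mulmx1 -trmx1 -sum_C linear_sum /= mulmx_sumr.
  rewrite (bigID (fun m : 'I_D => [exists j : 'I_D, (j <= m)%N && (W *m (C j)^T != 0)])) /=.
  rewrite [X in _ + X]big1 ?addr0 -?mulmx_sumr ?submxMl // => m.
  by apply: contraNeq => WCm; apply/existsP; exists m; rewrite leqnn.
apply/summx_sub => m /existsP[j /andP[ji WCj]]; exact: W_sub_weight_space ji WCj.
Qed.

End ParabolicStableSubspace.

End CocharacterWeights.

Lemma stable_unit_eqmx (k : fieldType) (m n : nat) (Y : 'M[k]_(m, n)) (h : 'M[k]_n) :
  h \in unitmx -> (Y *m h <= Y)%MS = (Y *m h == Y)%MS.
Proof.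
move=> hu; apply/idP/idP => [Yh | /andP[] //].
by rewrite -(mxrank_leqif_eq Yh).2 mxrankMfree ?row_free_unit.
Qed.

(* Through [v |-> v *m _^T] it acts by a^(1-e) on im A and by a^-e on im (1 - A). *)
Definition idem_cochar (k : fieldType) (n : nat) (A : 'M[k]_n) (e : nat) (a : k)
  : 'M[k]_n :=
  (a ^- e *: (a *: A + (1%:M - A)))^T.

Section IdempotentCocharacter.
Variables (k : closedFieldType) (n : nat) (A B : 'M[k]_n).
Hypothesis A_idem : A *m A = A.
Hypothesis AB1 : A + B = 1%:M.

Let BE : 1%:M - A = B. Proof. by rewrite -AB1 addrC addKr. Qed.
Let mulmx_AB : A *m B = 0. Proof. by rewrite -BE mulmxBr mulmx1 A_idem subrr. Qed.
Let mulmx_BA : B *m A = 0. Proof. by rewrite -BE mulmxBl mul1mx A_idem subrr. Qed.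
Let mulmx_BB : B *m B = B. Proof. by rewrite -{1}BE mulmxBl mul1mx mulmx_AB subr0. Qed.

Lemma submx_idemE (h : 'M[k]_n) : (A *m h <= A)%MS = (A *m h *m B == 0).
Proof.
apply/idP/eqP => [/submxP[Y ->] | AhB0]; first by rewrite -mulmxA mulmx_AB mulmx0.
by rewrite -[A *m h]mulmx1 -AB1 mulmxDr AhB0 addr0 submxMl.
Qed.

Lemma unit_idem_blocks (h : 'M[k]_n) : h \in unitmx -> A *m h *m B = 0 ->
  A *m h *m A + B *m h *m B \in unitmx.
Proof.
move=> hu AhB0; pose Nh := invmx h *m B *m h *m A.
have Ahi_sub : (A *m invmx h <= A)%MS.
  have /andP[_ AAh] : (A *m h == A)%MS by rewrite -stable_unit_eqmx // submx_idemE AhB0.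
  by have := submxMr (invmx h) AAh; rewrite mulmxK.
have AhiB0 : A *m invmx h *m B = 0 by apply/eqP; rewrite -submx_idemE.
have -> : A *m h *m A + B *m h *m B = h *m (1%:M - Nh).
  have hE : h = (A + B) *m h *m (A + B) by rewrite AB1 mul1mx mulmx1.
  rewrite [RHS]mulmxBr mulmx1 /Nh !mulmxA mulmxV // mul1mx [X in _ = X - _]hE.
  by rewrite !(mulmxDl, mulmxDr) AhB0 add0r addrAC addrK.
have NhNh : Nh *m Nh = 0.
  by rewrite /Nh -!mulmxA (mulmxA A) (mulmxA (A *m _) B) AhiB0 mul0mx !mulmx0.
have /mulmx1_unit[Nh_unit _] : (1%:M - Nh) *m (1%:M + Nh) = 1%:M.
  by rewrite mulmxBl mul1mx mulmxDr mulmx1 NhNh addr0 addrK.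
by rewrite unitmx_mul hu.
Qed.

Lemma idem_cocharE e a : idem_cochar A e a = (a ^- e *: (a *: A + B))^T.
Proof. by rewrite /idem_cochar BE. Qed.

Lemma idem_cocharM e a b :
  idem_cochar A e (a * b) = idem_cochar A e a *m idem_cochar A e b.
Proof.
rewrite !idem_cocharE -trmx_mul -scalemxAl -scalemxAr scalerA -invfM -exprMn mulrC.
rewrite !(mulmxDl, mulmxDr) -!scalemxAl -!scalemxAr A_idem mulmx_AB mulmx_BA mulmx_BB.
by rewrite !scaler0 addr0 add0r scalerA.
Qed.

Lemma idem_cochar1 e : idem_cochar A e 1 = 1%:M.
Proof. by rewrite idem_cocharE expr1n invr1 !scale1r AB1 trmx1. Qed.

Lemma idem_cochar_mulV e a : a != 0 -> idem_cochar A e a *m idem_cochar A e a^-1 = 1%:M.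
Proof. by move=> a0; rewrite -idem_cocharM mulfV // idem_cochar1. Qed.

Lemma idem_cochar_unit e a : a != 0 -> idem_cochar A e a \in unitmx.
Proof. by move=> a0; case: (mulmx1_unit (idem_cochar_mulV e a0)). Qed.

Lemma invmx_idem_cochar e a : a != 0 -> invmx (idem_cochar A e a) = idem_cochar A e a^-1.
Proof.
move=> a0; rewrite -[LHS]mulmx1 -(idem_cochar_mulV e a0) mulmxA mulVmx ?mul1mx //.
exact: idem_cochar_unit.
Qed.

Lemma idem_cochar_conj e (g : 'M[k]_n) a : a != 0 ->
  idem_cochar A e a *m g *m invmx (idem_cochar A e a) =
  (A *m g^T *m A + B *m g^T *m B)^T + a^-1 *: (A *m g^T *m B)^T + a *: (B *m g^T *m A)^T.
Proof.
move=> a0; rewrite invmx_idem_cochar // !idem_cocharE -[g]trmxK -!trmx_mul !trmxK.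
rewrite -!linearZ -!linearD /=; congr trmx.
rewrite -scalemxAl -!scalemxAr scalerA exprVn invrK mulfV ?expf_neq0 // scale1r.
rewrite !(mulmxDl, mulmxDr) -!scalemxAl -!scalemxAr !mulmxA scalerA mulVf // scale1r.
by rewrite -!addrA; congr (_ + _); rewrite [a *: _ + _]addrC addrCA.
Qed.

Lemma P_idem_cochar e (g : 'M[k]_n) : P_lam (idem_cochar A e) g <-> stab [:: A] g.
Proof.
rewrite /stab /= andbT; split=> [[gu lim] | /andP[gu]].
  rewrite gu -stable_unit_eqmx ?unitmx_tr // submx_idemE.
  have := lim0_exists_pole_eq0 lim (fun a => @idem_cochar_conj e g a).
  by move=> ZT0 /=; apply/eqP; rewrite -[LHS]trmxK ZT0 linear0.
rewrite -stable_unit_eqmx ?unitmx_tr // submx_idemE => /eqP AgB0; split=> //.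
apply: (lim0_exists_monomial (e := 1)
  (M0 := (A *m g^T *m A + B *m g^T *m B)^T) (M1 := (B *m g^T *m A)^T)) => [a a0|].
  by rewrite idem_cochar_conj // AgB0 trmx0 scaler0 addr0.
by rewrite expr1 scale0r addr0 unitmx_tr unit_idem_blocks ?unitmx_tr.
Qed.

Lemma idem_cochar_cocharacter (H : 'M[k]_n -> bool) e :
  (forall a, a != 0 -> H (idem_cochar A e a)) -> cocharacter_of H (idem_cochar A e).
Proof.
move=> HA; split=> [a a0 | | a b a0 b0 |]; first by rewrite idem_cochar_unit ?HA.
- exact: idem_cochar1.
- exact: idem_cocharM.
exists e, (fun i j => A j i *: 'X + (B j i)%:P) => a a0 i j.
by rewrite idem_cocharE !mxE !hornerE [a * _]mulrC.
Qed.

Lemma idem_cochar_fix (m : nat) (Y : 'M[k]_(m, n)) (b : bool) a : a != 0 ->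
  Y *m A = (if b then Y else 0) -> Y *m (idem_cochar A b a)^T = Y.
Proof.
move=> a0 YA; rewrite idem_cocharE trmxK -scalemxAr mulmxDr -scalemxAr.
rewrite -BE mulmxBr mulmx1 YA.
case: b {YA}; first by rewrite expr1 subrr addr0 scalerA mulVf ?scale1r.
by rewrite expr0 invr1 scale1r scaler0 add0r subr0.
Qed.

Lemma idem_cochar_stable (m : nat) (Y : 'M[k]_(m, n)) e a :
  (Y *m A <= Y)%MS -> (Y *m (idem_cochar A e a)^T <= Y)%MS.
Proof.
move=> YA; rewrite idem_cocharE trmxK -scalemxAr scalemx_sub // mulmxDr -scalemxAr.
by rewrite addmx_sub ?scalemx_sub // -BE mulmxBr mulmx1 addmx_sub // -scaleN1r scalemx_sub.
Qed.

End IdempotentCocharacter.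

Lemma is_flag_singleton (k : fieldType) (n : nat) (fl : seq 'M[k]_n) (W' W : 'M[k]_n) :
  is_flag fl -> W' \in fl -> (W' == W)%MS -> is_flag [:: W].
Proof.
case/andP=> /allP/(_ W') flW' _ /flW' + W'W.
by rewrite /is_flag /= !andbT (eqmx_rank W'W).
Qed.

Lemma stab_mem_stable (k : fieldType) (n : nat) (fl : seq 'M[k]_n) (W' W g : 'M[k]_n) :
  stab fl g -> W' \in fl -> (W' == W)%MS -> (W *m g^T <= W)%MS.
Proof.
case/andP=> _ /allP/(_ W') stabW' /stabW' /andP[W'g _] /eqmxP W'W.
by rewrite -(eqmxMr _ W'W) -W'W.
Qed.

Theorem lemma4p5 (k : closedFieldType) (n : nat) (U Ut : 'M[k]_n) :
  (U :&: Ut == (0 : 'M[k]_n))%MS -> (U + Ut == (1%:M : 'M[k]_n))%MS ->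
  forall W : 'M[k]_n, in_SK U Ut W <-> in_FK U Ut [:: W].
Proof.
move=> _ _ W; split=> [[fl [[flag_fl [lam [lam_cochar stab_P]]] [W' W'fl W'W]]] | FK_W];
  last by exists [:: W]; split=> //; exists W; rewrite ?mem_seq1 ?submx_refl.
split; first exact: is_flag_singleton flag_fl W'fl W'W.
case: lam_cochar => lam_K lam1 lamM [N [p /cocharacter_expansion[D [C lamE]]]].
have W_stable g : P_lam lam g -> (W *m g^T <= W)%MS.
  by move=> Pg; apply: stab_mem_stable ((stab_P g).2 Pg) W'fl W'W.
pose P (m : 'I_D) := [exists j : 'I_D, (j <= m)%N && (W *m (C j)^T != 0)].
pose A := (\sum_(m | P m) (C m)^T)%R.
have WA : (W :=: A)%MS := eqmx_upper_weights lamE lam1 lamM W_stable.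
have A_idem : A *m A = A := sum_CT_idem lamE lamM P.
have AB1 : A + (1%:M - A) = 1%:M by rewrite addrC subrK.
have Ut_fixed b : b != 0 -> Ut *m (lam b)^T = Ut.
  by move/lam_K/andP=> [_ /and3P[_ /eqP]].
have U_stable b : b != 0 -> (U *m (lam b)^T <= U)%MS.
  by move/lam_K/andP=> [_ /and3P[]].
exists (idem_cochar A [exists m, P m && (m == N :> nat)]); split.
  apply: (idem_cochar_cocharacter A_idem AB1) => a a0.
  rewrite /inK (idem_cochar_unit A_idem AB1) // (idem_cochar_fix AB1) ?eqxx //=.
    exact/(idem_cochar_stable AB1)/stable_sum_C/(lam_stable_C lamE).
  exact: (fixed_sum_C lamE lam1 lamM).
by move=> g; rewrite (P_idem_cochar A_idem AB1) /stab /= !(eqmxMr _ WA) !WA.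
Qed.
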